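(* Let $t\in\mathbb{R}$ and let $M\in\mathrm{SU}(2,1)$. Suppose that $M$ maps the boundary points $\infty=[1:0:0]$, $0=[0:0:1]$ and $(1,t)=[-\tfrac12+\tfrac{it}{2}:1:1]$ to boundary points with lifts of the form ${}^t(w_{j1},w_{j2},1)$, $j=0,1,2$ (one for each image point). Let $K=\mathbb{Q}(it, w_{jk},\overline{w_{jk}} : j=0,1,2,\ k=1,2)$. Then $M^3\in\mathrm{SU}(2,1,K)$, i.e. all entries of $M^3$ lie in $K$.
   Context: $\mathrm{SU}(2,1)$ is the group of complex $3\times 3$ matrices of determinant $1$ preserving the Hermitian form $\langle z,w\rangle = z_1\overline{w_3}+z_2\overline{w_2}+z_3\overline{w_1}$ on $\mathbb{C}^3$, acting projectively on the boundary of complex hyperbolic plane, namely the projectivization of $\{z\neq0:\langle z,z\rangle=0\}$. For a field $K$, $\mathrm{SU}(2,1,K)$ is the set of elements of $\mathrm{SU}(2,1)$ with all entries in $K$. *)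

From HB Require Import structures.
From mathcomp Require Import all_boot all_order all_algebra.
From mathcomp Require Import complex.
From mathcomp Require Import reals.
Set Implicit Arguments. Unset Strict Implicit. Unset Printing Implicit Defensive.
Import Order.TTheory GRing.Theory Num.Theory.
Local Open Scope ring_scope.
Local Open Scope complex_scope.

Section Defs.
Variable R : realType.
Local Notation C := R[i].

Definition i0 : 'I_3 := @Ordinal 3 0 isT.
Definition i1 : 'I_3 := @Ordinal 3 1 isT.
Definition i2 : 'I_3 := @Ordinal 3 2 isT.

Definition vec3 (a b c : C) : 'cV[C]_3 :=
  \col_(k < 3) (if k == i0 then a else if k == i1 then b else c).

Definition hform (z w : 'cV[C]_3) : C :=
  z i0 0 * (w i2 0)^* + z i1 0 * (w i1 0)^* + z i2 0 * (w i0 0)^*.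

Definition SU21 (M : 'M[C]_3) : Prop :=
  \det M = 1 /\ forall z w : 'cV[C]_3, hform (M *m z) (M *m w) = hform z w.

(* membership in the subfield of C generated by the set G (over Q, i.e. the
   smallest subfield of C containing G) *)
Definition subfield_closed (S : C -> Prop) : Prop :=
  S 0 /\ S 1 /\
  (forall x y, S x -> S y -> S (x + y)) /\
  (forall x, S x -> S (- x)) /\
  (forall x y, S x -> S y -> S (x * y)) /\
  (forall x, S x -> S (x^-1)).

Definition in_gen_field (G : C -> Prop) (z : C) : Prop :=
  forall S, subfield_closed S -> (forall g, G g -> S g) -> S z.

Definition bpt (t : R) (j : 'I_3) : 'cV[C]_3 :=
  if j == i0 then vec3 1 0 0
  else if j == i1 then vec3 0 0 1
  else vec3 (- 2^-1 + 'i * t%:C / 2) 1 1.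

Definition is_lift (v : 'cV[C]_3) (a b : C) : Prop :=
  exists lam : C, lam != 0 /\ v = lam *: vec3 a b 1.

Definition gensK (t : R) (w1 w2 : 'I_3 -> C) (g : C) : Prop :=
  g = 'i * t%:C \/
  exists j : 'I_3, [\/ g = w1 j, g = w2 j, g = (w1 j)^* | g = (w2 j)^*].

End Defs.

(* The lifts of oo, 0 and (1,t) are M e0, M e2 and M (c e0 + e1 + e2) with
   c = -1/2 + i t/2; by hypothesis they equal l_j (w_j1, w_j2, 1) for some
   scalars l_j.  Since M preserves the Hermitian form, each product
   l_j conj(l_k) is a ratio of elements of K, and combining two such products
   shows that l_1 / l_0 and l_2 / l_0 lie in K.  Hence M = l_0 N with N a matrix
   over K.  Finally det M = 1 gives l_0^3 = 1 / det N, an element of K, so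
   M^3 = l_0^3 N^3 is defined over K. *)
From HB Require Import structures.
From mathcomp Require Import all_boot all_order all_algebra.
From mathcomp Require Import complex.
From mathcomp Require Import reals.
From mathcomp Require Import ring.
Import Order.TTheory GRing.Theory Num.Theory.
Local Open Scope ring_scope.
Local Open Scope complex_scope.

Definition mx_over (R : realType) (S : R[i] -> Prop) m n (A : 'M[R[i]]_(m, n)) :=
  forall i j, S (A i j).
Arguments mx_over {R} S {m n} A.

Section SubfieldClosed.
Context {R : realType} {S : R[i] -> Prop} (HS : subfield_closed S).

Lemma subfield0 : S 0. Proof. by case: HS. Qed.
Lemma subfield1 : S 1. Proof. by case: HS => _ []. Qed.

Lemma subfieldD {x y} : S x -> S y -> S (x + y).
Proof. by case: HS => _ [_ [hD _]]; apply: hD. Qed.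

Lemma subfieldN {x} : S x -> S (- x).
Proof. by case: HS => _ [_ [_ [hN _]]]; apply: hN. Qed.

Lemma subfieldM {x y} : S x -> S y -> S (x * y).
Proof. by case: HS => _ [_ [_ [_ [hM _]]]]; apply: hM. Qed.

Lemma subfieldV {x} : S x -> S x^-1.
Proof. by case: HS => _ [_ [_ [_ [_ hV]]]]; apply: hV. Qed.

Lemma subfieldB {x y} : S x -> S y -> S (x - y).
Proof. by move=> Sx Sy; apply: subfieldD => //; apply: subfieldN. Qed.

Lemma subfieldf {x y} : S x -> S y -> S (x / y).
Proof. by move=> Sx Sy; apply: subfieldM => //; apply: subfieldV. Qed.

Lemma subfield_sum (I : Type) (r : seq I) (P : pred I) (F : I -> R[i]) :
  (forall i, P i -> S (F i)) -> S (\sum_(i <- r | P i) F i).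
Proof. by move=> SF; apply: big_ind => //; [apply: subfield0 | exact: @subfieldD]. Qed.

Lemma subfield_prod (I : Type) (r : seq I) (P : pred I) (F : I -> R[i]) :
  (forall i, P i -> S (F i)) -> S (\prod_(i <- r | P i) F i).
Proof. by move=> SF; apply: big_ind => //; [apply: subfield1 | exact: @subfieldM]. Qed.

Lemma mx_over_mul m n p (A : 'M_(m, n)) (B : 'M_(n, p)) :
  mx_over S A -> mx_over S B -> mx_over S (A *m B).
Proof.
by move=> SA SB i j; rewrite mxE; apply: subfield_sum => k _; apply: subfieldM.
Qed.

Lemma mx_over_exp n (A : 'M_n) k :
  mx_over S A -> mx_over S (A ^+ k).
Proof.
move=> SA; elim: k => [|k IHk] i j.
  by rewrite expr0 mxE; case: (i == j); [apply: subfield1 | apply: subfield0].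
by rewrite exprS -mulmxE; apply: mx_over_mul.
Qed.

Lemma subfield_det n (A : 'M_n) : mx_over S A -> S (\det A).
Proof.
move=> SA; apply: subfield_sum => s _; apply: subfieldM.
  by case: (perm.odd_perm s); [apply/subfieldN/subfield1 | apply: subfield1].
by apply: subfield_prod.
Qed.

Lemma mx_over_exp_det1 n (a : R[i]) (N : 'M_n.+1) :
  mx_over S N -> \det (a *: N) = 1 -> mx_over S ((a *: N) ^+ n.+1).
Proof.
move=> SN; rewrite detZ => detaN.
have detN_neq0 : \det N != 0.
  by apply: contra_eq_neq detaN => ->; rewrite mulr0 eq_sym oner_neq0.
have expa : a ^+ n.+1 = (\det N)^-1 by apply: (mulIf detN_neq0); rewrite detaN mulVf.
move=> i j; rewrite exprZn mxE expa.
by apply: subfieldM; [apply/subfieldV/subfield_det | apply: mx_over_exp].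
Qed.

End SubfieldClosed.

Lemma ord3_cases (j : 'I_3) : [\/ j = i0, j = i1 | j = i2].
Proof.
by case: j => [[|[|[|//]]] ?]; [apply: Or31 | apply: Or32 | apply: Or33]; apply: val_inj.
Qed.

Section Vec3.
Variable R : realType.
Local Notation C := R[i].

Lemma vec3E0 (a b c : C) : vec3 a b c i0 0 = a. Proof. by rewrite mxE. Qed.
Lemma vec3E1 (a b c : C) : vec3 a b c i1 0 = b. Proof. by rewrite mxE. Qed.
Lemma vec3E2 (a b c : C) : vec3 a b c i2 0 = c. Proof. by rewrite mxE. Qed.
Definition vec3E := (vec3E0, vec3E1, vec3E2).

Lemma mulmx_vec3E m (M : 'M[C]_(m, 3)) a b c k :
  (M *m vec3 a b c) k 0 = M k i0 * a + M k i1 * b + M k i2 * c.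
Proof.
rewrite mxE !big_ord_recl big_ord0 !mxE /= addr0 addrA.
by congr (M k _ * _ + M k _ * _ + M k _ * _); apply: val_inj.
Qed.

Lemma hform_lift (l m a b a' b' : C) :
  hform (l *: vec3 a b 1) (m *: vec3 a' b' 1) = l * m^* * (a + b * b'^* + a'^*).
Proof. by rewrite /hform !mxE /= !rmorphM rmorph1; ring. Qed.

Lemma subfield_vec3 (S : C -> Prop) a b c k :
  S a -> S b -> S c -> S (vec3 a b c k 0).
Proof. by move=> Sa Sb Sc; rewrite mxE; case: ifP => _ //; case: ifP. Qed.

End Vec3.

Section BoundaryPoints.
Variables (R : realType) (t : R).
Local Notation c := (- 2^-1 + 'i * t%:C / 2 : R[i]).

Lemma bpt0 : bpt t i0 = vec3 1 0 0. Proof. by []. Qed.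
Lemma bpt1 : bpt t i1 = vec3 0 0 1. Proof. by []. Qed.
Lemma bpt2 : bpt t i2 = vec3 c 1 1. Proof. by []. Qed.

Lemma conj_bpt_coord : c^* = -1 - c.
Proof.
rewrite rmorphD rmorphN !rmorphM fmorphV rmorph_nat.
by rewrite [X in _ + X * _ * _ = _]conjCi [X in _ + _ * X * _ = _]conjc_real; field.
Qed.

Lemma bpt_coord_neq0 : c != 0.
Proof.
apply/eqP => c0; move: conj_bpt_coord; rewrite c0 subr0 [X in X = _]conjC0 => /eqP.
by rewrite eq_sym oppr_eq0 oner_eq0.
Qed.

Lemma conj_bpt_coord_neq0 : c^* != 0.
Proof. by rewrite conjc_eq0 bpt_coord_neq0. Qed.

Lemma hform_bpt01 : hform (bpt t i0) (bpt t i1) = 1.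
Proof. by rewrite /hform bpt0 bpt1 !vec3E rmorph1; ring. Qed.

Lemma hform_bpt02 : hform (bpt t i0) (bpt t i2) = 1.
Proof. by rewrite /hform bpt0 bpt2 !vec3E rmorph1; ring. Qed.

Lemma hform_bpt12 : hform (bpt t i1) (bpt t i2) = c^*.
Proof. by rewrite /hform bpt1 bpt2 !vec3E rmorph1; ring. Qed.

Lemma hform_bpt21 : hform (bpt t i2) (bpt t i1) = c.
Proof. by rewrite /hform bpt1 bpt2 !vec3E rmorph1 rmorph0; ring. Qed.

End BoundaryPoints.

Section LiftScalars.
Context {R : realType} {t : R} {M : 'M[R[i]]_3} {w1 w2 l : 'I_3 -> R[i]}.
Hypothesis formM : forall z w, hform (M *m z) (M *m w) = hform z w.
Hypothesis liftM : forall j, M *m bpt t j = l j *: vec3 (w1 j) (w2 j) 1.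
Hypothesis l0_neq0 : l i0 != 0.
Local Notation c := (- 2^-1 + 'i * t%:C / 2 : R[i]).

Definition lift_pairing j k := w1 j + w2 j * (w2 k)^* + (w1 k)^*.

Lemma hform_lift_images j k :
  l j * (l k)^* * lift_pairing j k = hform (bpt t j) (bpt t k).
Proof. by rewrite -formM !liftM hform_lift. Qed.

(* Comparing the pairings of the images of (j, k) and of (0, k) eliminates
   the unknown scalar l k. *)
Lemma lift_scalar_ratio j k a :
  hform (bpt t j) (bpt t k) = a -> a != 0 -> hform (bpt t i0) (bpt t k) = 1 ->
  l j = l i0 * (a * lift_pairing i0 k / lift_pairing j k).
Proof.
rewrite -!hform_lift_images => ejk a_neq0 e0k.
have hjk_neq0 : lift_pairing j k != 0.
  by apply: contra_neq a_neq0 => hjk0; rewrite -ejk hjk0 mulr0.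
apply: (mulIf hjk_neq0).
transitivity (l j * lift_pairing j k * (l i0 * (l k)^* * lift_pairing i0 k)).
  by rewrite e0k mulr1.
by rewrite -ejk; field.
Qed.

Lemma lift_scalar1 :
  l i1 = l i0 * (c^* * lift_pairing i0 i2 / lift_pairing i1 i2).
Proof.
exact: (lift_scalar_ratio _ _ _ (hform_bpt12 _ t) (conj_bpt_coord_neq0 _ t)
          (hform_bpt02 _ t)).
Qed.

Lemma lift_scalar2 :
  l i2 = l i0 * (c * lift_pairing i0 i1 / lift_pairing i2 i1).
Proof.
exact: (lift_scalar_ratio _ _ _ (hform_bpt21 _ t) (bpt_coord_neq0 _ t) (hform_bpt01 _ t)).
Qed.

Local Notation a j k := (vec3 (w1 j) (w2 j) 1 k 0).

Lemma lift_entry j k : (M *m bpt t j) k 0 = l j * a j k.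
Proof. by rewrite liftM mxE. Qed.

Lemma normalized_column0 k : M k i0 / l i0 = a i0 k.
Proof.
have := lift_entry i0 k; rewrite bpt0 mulmx_vec3E mulr1 !mulr0 !addr0 => ->.
by rewrite mulrC mulKf.
Qed.

Lemma normalized_column2 k :
  M k i2 / l i0 = c^* * lift_pairing i0 i2 / lift_pairing i1 i2 * a i1 k.
Proof.
have := lift_entry i1 k; rewrite bpt1 mulmx_vec3E !mulr0 mulr1 !add0r => ->.
by rewrite lift_scalar1 mulrAC [l i0 * _]mulrC mulfK.
Qed.

Lemma normalized_column1 k :
  M k i1 / l i0 = c * lift_pairing i0 i1 / lift_pairing i2 i1 * a i2 k
                  - c * a i0 k - M k i2 / l i0.
Proof.
have := lift_entry i2 k; rewrite bpt2 mulmx_vec3E !mulr1 => col.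
have -> : M k i1 = l i2 * a i2 k - M k i0 * c - M k i2 by rewrite -col; ring.
rewrite lift_scalar2 -normalized_column0.
by move: (c * _ / _) => r; field.
Qed.

Section InSubfield.
Context {S : R[i] -> Prop} (HS : subfield_closed S).
Hypothesis genS : forall g, gensK t w1 w2 g -> S g.

Lemma subfield_gens j : [/\ S (w1 j), S (w2 j), S (w1 j)^* & S (w2 j)^*].
Proof.
by split; apply: genS; right; exists j;
  [apply: Or41 | apply: Or42 | apply: Or43 | apply: Or44].
Qed.

Lemma subfield_lift_pairing j k : S (lift_pairing j k).
Proof.
have [Sw1j Sw2j _ _] := subfield_gens j; have [_ _ Sw1k Sw2k] := subfield_gens k.
exact: (subfieldD HS (subfieldD HS Sw1j (subfieldM HS Sw2j Sw2k)) Sw1k).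
Qed.

Lemma subfield_bpt_coord : S c.
Proof.
have S2 : S 2 := subfieldD HS (subfield1 HS) (subfield1 HS).
have Sit : S ('i * t%:C) by apply: genS; left.
exact: (subfieldD HS (subfieldN HS (subfieldV HS S2)) (subfieldf HS Sit S2)).
Qed.

Lemma subfield_conj_bpt_coord : S c^*.
Proof.
rewrite conj_bpt_coord.
exact: (subfieldB HS (subfieldN HS (subfield1 HS)) subfield_bpt_coord).
Qed.

Lemma subfield_lift_vec j k : S (a j k).
Proof.
have [Sw1 Sw2 _ _] := subfield_gens j.
by apply: subfield_vec3 => //; apply: subfield1.
Qed.

Lemma subfield_lift_ratio x j k :
  S x -> S (x * lift_pairing i0 k / lift_pairing j k).
Proof.
by move=> Sx; apply: (subfieldf HS (subfieldM HS Sx _)); apply: subfield_lift_pairing.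
Qed.

Lemma subfield_normalized_entry k j : S (M k j / l i0).
Proof.
have S_col2 : S (M k i2 / l i0).
  rewrite normalized_column2; apply: (subfieldM HS _ (subfield_lift_vec _ _)).
  exact: subfield_lift_ratio subfield_conj_bpt_coord.
case: (ord3_cases j) => ->; last exact: S_col2.
  by rewrite normalized_column0; apply: subfield_lift_vec.
rewrite normalized_column1; apply: (subfieldB HS _ S_col2); apply: (subfieldB HS).
  apply: (subfieldM HS _ (subfield_lift_vec _ _)).
  exact: subfield_lift_ratio subfield_bpt_coord.
exact: (subfieldM HS subfield_bpt_coord (subfield_lift_vec _ _)).
Qed.

End InSubfield.
End LiftScalars.

Theorem mainTheorem4 (R : realType) (t : R) (M : 'M[R[i]]_3)
    (w1 w2 : 'I_3 -> R[i]) :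
  SU21 M ->
  (forall j : 'I_3, is_lift (M *m bpt t j) (w1 j) (w2 j)) ->
  forall r c : 'I_3, in_gen_field (gensK t w1 w2) ((M ^+ 3) r c).
Proof.
move=> [detM formM] lifts r c S HS genS.
have [l liftM] := fin_all_exists lifts.
have l0_neq0 : l i0 != 0 by case: (liftM i0).
have MN : M = l i0 *: \matrix_(k, j) (M k j / l i0).
  by apply/matrixP => k j; rewrite !mxE mulrC divfK.
rewrite MN; apply: mx_over_exp_det1 => //; last by rewrite -MN.
move=> k j; rewrite mxE.
exact: (subfield_normalized_entry formM (fun j => (liftM j).2) l0_neq0 HS genS).
Qed.
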